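(* Suppose the relationship network on $V$ is fixed and known to the designer. For a distinguished agent $k\in V$ define the mechanism $g^{3,k}$ by, for $i\in V\setminus\{k\}$, $$g^{3,k}_i(\mathbf m)=\begin{cases}\dfrac{1}{|\mathrm{posF}(\mathbf m_{F_i\cap F_k})\setminus\{k\}|}, & \text{if } i\in \mathrm{posF}(\mathbf m_{F_k}),\\[2mm] 0,&\text{otherwise,}\end{cases}\qquad g^{3,k}_k(\mathbf m)=1-\sum_{i\in V\setminus\{k\}}g^{3,k}_i(\mathbf m).$$ Then for every $k\in V$, $g^{3,k}$ is valid and DSIC. Moreover, if the Intersection Condition F(k) holds, i.e. $F_i\cap F_j\cap F_k\neq\varnothing$ for all $i,j\in V\setminus\{k\}$ (including $i=j$), then $g^{3,k}$ is efficient.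
   Context: Let $V=\{1,\dots,n\}$ be a finite set of agents. A relationship network on $V$ assigns to every unordered pair of distinct agents exactly one of three symmetric relations: friends, enemies, or impartial. For $i\in V$, $F_i,E_i,I_i$ denote the sets of friends, enemies and impartials of $i$; they partition $V\setminus\{i\}$, and $j\in F_i\iff i\in F_j$ (similarly for $E$ and $I$). A set $N\subseteq V$ is the set of needy agents. Preferences: fix weights $w_f,w_e>0$. For $p,p'\in[0,1]^V$, $p\succ_i p'$ iff either $p_i>p'_i$, or $p_i=p'_i$ and $w_f\sum_{j\in F_i}(p_j-p'_j)-w_e\sum_{j\in E_i}(p_j-p'_j)>0$; $p\succsim_i p'$ means not $p'\succ_i p$. Known-network setting: each agent $i$ sends a message $m_i\subseteq V$ (the set of agents $i$ reports as needy; $j\in m_i$ is a positive vote of $i$ on $j$). A message profile is $\mathbf m=(m_i)_{i\in V}$; for $X\subseteq V$, $\mathbf m_X=(m_j)_{j\in X}$. A mechanism is a function $g:(2^V)^V\to[0,1]^V$; it is valid if $\sum_{i\in V}g_i(\mathbf m)\le 1$ for all $\mathbf m$; it is DSIC if for all $i\in V$, all profiles $\mathbf m$ and all $m'_i\subseteq V$, $g(\mathbf m)\succsim_i g(m'_i,\mathbf m_{-i})$; it is efficient if for every nonempty $N\subseteq V$, at the truthful profile $\mathbf m$ with $m_j=N$ for all $j$, $\sum_{i\in N}g_i(\mathbf m)=1$. For $X\subseteq V$, $\mathrm{posF}(\mathbf m_X)$ is the set of agents $j\in V$ such that $j\in m_l$ for every $l\in X\cap F_j$ (i.e. $j$ receives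 positive votes from all its friends in $X$). *)

From HB Require Import structures.
From mathcomp Require Import all_boot all_order all_algebra.
Set Implicit Arguments. Unset Strict Implicit. Unset Printing Implicit Defensive.
Import Order.TTheory GRing.Theory Num.Theory.
Local Open Scope ring_scope.

Inductive relkind := Friend | Enemy | Impartial.
Definition relkind_eqb (a b : relkind) : bool :=
  match a, b with
  | Friend, Friend | Enemy, Enemy | Impartial, Impartial => true
  | _, _ => false end.
Lemma relkind_eqP : Equality.axiom relkind_eqb.
Proof. by case; case; constructor. Qed.
HB.instance Definition _ := hasDecEq.Build relkind relkind_eqP.

(* A relationship network on V = 'I_n: net i j is the relation between i and j
   (the diagonal value is irrelevant). *)
Definition network (n : nat) := 'I_n -> 'I_n -> relkind.
Definition sym_network n (net : network n) := forall i j, net i j = net j i.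

Definition friends n (net : network n) (i : 'I_n) : {set 'I_n} :=
  [set j | (j != i) && (net i j == Friend)].
Definition enemies n (net : network n) (i : 'I_n) : {set 'I_n} :=
  [set j | (j != i) && (net i j == Enemy)].

Definition profile n := 'I_n -> {set 'I_n}.
Definition mechanism (R : realFieldType) n := profile n -> 'I_n -> R.

Definition upd n (m : profile n) (i : 'I_n) (mi : {set 'I_n}) : profile n :=
  fun j => if j == i then mi else m j.

Definition posF n (net : network n) (m : profile n) (X : {set 'I_n}) : {set 'I_n} :=
  [set j | [forall l in X :&: friends net j, j \in m l]].

Definition spref (R : realFieldType) n (net : network n) (wf we : R) (i : 'I_n)
  (p p' : 'I_n -> R) : Prop :=
  p' i < p i \/
  (p i = p' i /\
   0 < wf * (\sum_(j in friends net i) (p j - p' j))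
       - we * (\sum_(j in enemies net i) (p j - p' j))).

Definition is_mech (R : realFieldType) n (g : mechanism R n) : Prop :=
  forall m i, 0 <= g m i <= 1.

Definition valid (R : realFieldType) n (g : mechanism R n) : Prop :=
  forall m, \sum_i g m i <= 1.

Definition DSIC (R : realFieldType) n (net : network n) (wf we : R)
  (g : mechanism R n) : Prop :=
  forall i m mi', ~ spref net wf we i (g (upd m i mi')) (g m).

Definition efficient (R : realFieldType) n (g : mechanism R n) : Prop :=
  forall N : {set 'I_n}, N != set0 ->
    \sum_(i in N) g (fun _ => N) i = 1.

Definition g3 (R : realFieldType) n (net : network n) (k : 'I_n) : mechanism R n :=
  fun m =>
    let gi (i : 'I_n) : R :=
      if i \in posF net m (friends net k)
      then (#|posF net m (friends net i :&: friends net k) :\ k|%:R)^-1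
      else 0 in
    fun i => if i == k then 1 - \sum_(j | j != k) gi j else gi i.

Definition intersection_cond n (net : network n) (k : 'I_n) : Prop :=
  forall i j, i != k -> j != k ->
    friends net i :&: friends net j :&: friends net k != set0.

(* Agent k receives whatever the others do not, so the allocation always sums
   to one.  The share of j != k reads only the votes of j's friends inside F_k,
   so a deviation by i can change only the shares of i's friends (and i is not
   its own friend); by budget balance their total change is zero, so neither
   i's probability nor its friend/enemy term moves.  Validity: posF is antitone
   in the set of voters, so a positive share 1/|posF(m_{F_j ∩ F_k}) \ k| is at
   most 1/|posF(m_{F_k}) \ k|, and only members of the latter set are paid.
   Efficiency under F(k): at the truthful profile N, each non-needy j != k has
   a friend in F_i ∩ F_j ∩ F_k voting against it; so if k is needy nobody
   outside N is paid, and otherwise every needy agent's candidate set is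
   exactly N and it receives 1/|N|. *)

From mathcomp Require Import all_boot all_order all_algebra.
Set Implicit Arguments. Unset Strict Implicit. Unset Printing Implicit Defensive.
Import Order.TTheory GRing.Theory Num.Theory.
Local Open Scope ring_scope.

Section PosF.
Variables (n : nat) (net : network n).

Lemma posF_subset (m : profile n) (X Y : {set 'I_n}) :
  X \subset Y -> posF net m Y \subset posF net m X.
Proof.
move=> /subsetP sXY; apply/subsetP => j; rewrite !inE => /forallP posY.
apply/forallP => l; apply/implyP => /setIP[/sXY Yl Fjl].
by have := posY l; rewrite inE Yl Fjl.
Qed.

Lemma posF_mem_eq (m m' : profile n) (X : {set 'I_n}) j :
  {in X :&: friends net j, m =1 m'} ->
  (j \in posF net m X) = (j \in posF net m' X).
Proof.
move=> eq_m; rewrite !inE; apply: eq_forallb => l.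
by case: (boolP (l \in _)) => //= /eq_m ->.
Qed.

Lemma posF_eq (m m' : profile n) (X : {set 'I_n}) :
  {in X, m =1 m'} -> posF net m X = posF net m' X.
Proof.
by move=> eq_m; apply/setP => j; apply: posF_mem_eq => l /setIP[/eq_m].
Qed.

Lemma mem_posF_const (N X : {set 'I_n}) j :
  j \in N -> j \in posF net (fun=> N) X.
Proof. by move=> Nj; rewrite inE; apply/forallP => l; rewrite Nj implybT. Qed.

Lemma notin_posF_const (N X : {set 'I_n}) j :
  X :&: friends net j != set0 -> j \notin N -> j \notin posF net (fun=> N) X.
Proof.
case/set0Pn=> l XFl Nj; rewrite inE negb_forall.
by apply/existsP; exists l; rewrite XFl.
Qed.

End PosF.

Section Balanced.
Variables (R : realFieldType) (n : nat) (net : network n) (wf we : R).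

Lemma not_friend_self (i : 'I_n) : i \notin friends net i.
Proof. by rewrite inE eqxx. Qed.

Lemma enemy_not_friend (i j : 'I_n) : j \in enemies net i -> j \notin friends net i.
Proof. by rewrite !inE => /andP[_ /eqP->]; rewrite andbF. Qed.

Lemma DSIC_of_balanced_friend_local (g : mechanism R n) :
  (forall m, \sum_i g m i = 1) ->
  (forall m i mi' j, j \notin friends net i -> g (upd m i mi') j = g m j) ->
  DSIC net wf we g.
Proof.
move=> balanced local i m mi'; set m' := upd m i mi'.
have enemy_diff0 : \sum_(j in enemies net i) (g m' j - g m j) = 0.
  by apply: big1 => j /enemy_not_friend /local ->; rewrite subrr.
have friend_diff0 : \sum_(j in friends net i) (g m' j - g m j) = 0.
  have : \sum_j (g m' j - g m j) = 0 by rewrite sumrB !balanced subrr.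
  rewrite (bigID [in friends net i]) /= [X in _ + X]big1 ?addr0 //.
  by move=> j /local ->; rewrite subrr.
rewrite /spref enemy_diff0 friend_diff0 !mulr0 subrr ltxx.
by rewrite local ?not_friend_self // ltxx => -[|[]].
Qed.

End Balanced.

Section G3.
Variables (R : realFieldType) (n : nat) (net : network n) (k : 'I_n).
Hypothesis net_sym : sym_network net.

Definition g3_share (m : profile n) (i : 'I_n) : R :=
  if i \in posF net m (friends net k)
  then (#|posF net m (friends net i :&: friends net k) :\ k|%:R)^-1 else 0.

Lemma g3E_k m : g3 R net k m k = 1 - \sum_(j | j != k) g3_share m j.
Proof. by rewrite /g3 eqxx. Qed.

Lemma g3E m i : i != k -> g3 R net k m i = g3_share m i.
Proof. by rewrite /g3 => /negbTE->. Qed.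

Lemma g3_share_ge0 m i : 0 <= g3_share m i.
Proof. by rewrite /g3_share; case: ifP => // _; rewrite invr_ge0 ler0n. Qed.

Lemma friendsC i j : (j \in friends net i) = (i \in friends net j).
Proof. by rewrite !inE eq_sym net_sym. Qed.

Definition g3_candidates (m : profile n) : {set 'I_n} :=
  posF net m (friends net k) :\ k.

Lemma g3_share_le m j : j != k ->
  g3_share m j <= (if j \in g3_candidates m then (#|g3_candidates m|%:R)^-1 else 0).
Proof.
move=> jk; rewrite /g3_share /g3_candidates in_setD1 jk /=.
case: ifP => // posj; rewrite lef_pV2 ?posrE ?ltr0n ?card_gt0 ?ler_nat.
- by apply/subset_leq_card/setSD/posF_subset/subsetIr.
- apply/set0Pn; exists j; rewrite in_setD1 jk /=.
  by move: posj; apply/subsetP/posF_subset/subsetIr.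
- by apply/set0Pn; exists j; rewrite in_setD1 jk.
Qed.

Lemma sum_g3_share_le1 m : \sum_(j | j != k) g3_share m j <= 1.
Proof.
apply: le_trans (ler_sum _ (fun j => g3_share_le m (j:=j))) _.
rewrite -big_mkcondr /= (eq_bigl [in g3_candidates m]); last first.
  by move=> j; rewrite /g3_candidates in_setD1 andbA andbb.
rewrite sumr_const -[_ *+ _]mulr_natl.
have [->|cand_gt0] := posnP #|g3_candidates m|; first by rewrite mul0r.
by rewrite mulfV // pnatr_eq0 -lt0n.
Qed.

Lemma sum_g3 m : \sum_i g3 R net k m i = 1.
Proof.
rewrite (bigD1 k) //= g3E_k (eq_bigr (g3_share m)) ?subrK //.
by move=> j; apply: g3E.
Qed.

Lemma g3_is_mech : is_mech (g3 R net k).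
Proof.
move=> m i; have sum_ge0 (P : pred 'I_n) : 0 <= \sum_(j | P j) g3_share m j.
  by apply: sumr_ge0 => j _; apply: g3_share_ge0.
have [->|ik] := eqVneq i k.
  by rewrite g3E_k subr_ge0 sum_g3_share_le1 gerBl sum_ge0.
rewrite g3E // g3_share_ge0 (le_trans _ (sum_g3_share_le1 m)) //.
by rewrite (bigD1 i) //= lerDl sum_ge0.
Qed.

Lemma g3_share_eq m m' j :
  {in friends net j :&: friends net k, m =1 m'} ->
  g3_share m j = g3_share m' j.
Proof.
move=> eq_m; rewrite /g3_share (posF_eq net eq_m) (posF_mem_eq (m' := m')) //.
by move=> l; rewrite setIC; apply: eq_m.
Qed.

Lemma g3_upd_notin_friends m i mi' j :
  j \notin friends net i -> g3 R net k (upd m i mi') j = g3 R net k m j.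
Proof.
have share_eq j' : i \notin friends net j' :&: friends net k ->
    g3_share (upd m i mi') j' = g3_share m j'.
  move=> iF; apply: g3_share_eq => l lF; rewrite /upd.
  by case: eqP => // li; rewrite -li lF in iF.
move=> ij; have [iFk|iNFk] := boolP (i \in friends net k).
  have jk : j != k by apply: contraNneq ij => ->; rewrite friendsC.
  by rewrite !g3E // share_eq // inE -friendsC negb_and ij.
have share_eq' j' : g3_share (upd m i mi') j' = g3_share m j'.
  by apply: share_eq; rewrite inE negb_and iNFk orbT.
rewrite /g3; case: eqP => _; last exact: share_eq'.
by congr (_ - _); apply: eq_bigr => j' _; apply: share_eq'.
Qed.

Lemma g3_efficient : intersection_cond net k -> efficient (g3 R net k).
Proof.
move=> IC N N0; set m0 : profile n := fun=> N.
have [Nk|Nk] := boolP (k \in N).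
  rewrite -(sum_g3 m0) [RHS](bigID [in N]) /= [X in _ = _ + X]big1 ?addr0 // => i Ni.
  have ik : i != k by apply: contraNneq Ni => ->.
  rewrite g3E // /g3_share ifN // notin_posF_const //.
  by rewrite setIC -[friends net i]setIid; apply: IC.
have share_needy i : i \in N -> g3 R net k m0 i = (#|N|%:R)^-1.
  move=> Ni; have ik : i != k by apply: contraNneq Nk => <-.
  rewrite g3E // /g3_share mem_posF_const //; congr (_%:R^-1).
  suff -> : posF net m0 (friends net i :&: friends net k) :\ k = N by [].
  apply/setP => j; rewrite in_setD1; have [Nj|Nj] := boolP (j \in N).
    by rewrite mem_posF_const // andbT; apply: contraNneq Nk => <-.
  have [-> //|jk] := eqVneq j k; apply/negbTE/notin_posF_const => //.
  by rewrite -setIA [friends net k :&: _]setIC setIA; apply: IC.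
rewrite (eq_bigr _ share_needy) sumr_const -[_ *+ _]mulr_natl mulfV //.
by rewrite pnatr_eq0 -lt0n card_gt0.
Qed.

End G3.

Theorem theorem3 (R : realFieldType) (n : nat) (net : network n)
  (Hsym : sym_network net) (wf we : R) (Hwf : 0 < wf) (Hwe : 0 < we) (k : 'I_n) :
  [/\ is_mech (g3 R net k), valid (g3 R net k), DSIC net wf we (g3 R net k)
    & (intersection_cond net k -> efficient (g3 R net k))].
Proof.
split.
- exact: g3_is_mech.
- by move=> m; rewrite sum_g3.
- apply: DSIC_of_balanced_friend_local; first exact: sum_g3.
  by move=> m i mi' j; apply: g3_upd_notin_friends.
- exact: g3_efficient.
Qed.
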